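(* Let $i,\ell\in\{0,\dots,r-2\}$, $k\in\mathbb Z$, and $P=\mathbb C^H_{kr}\otimes P_\ell$. Then any nonzero morphism $P_i\to P$ in $\mathcal C$ is equal to one of $$\lambda I_i+\mu x_i,\qquad \lambda\alpha_i^+,\qquad \lambda\alpha_i^-,$$ for some $\lambda,\mu\in\mathbb C$. Here the morphisms are uniquely determined by: - $I_i:P_i\to P_i$, $h_i\mapsto h_i$; - $x_i:P_i\to P_i$, $h_i\mapsto s_i$; - $\alpha_i^+:P_i\to\mathbb C^H_r\otimes P_{r-2-i}$, $h_i\mapsto 1\otimes L_{i-r}$; - $\alpha_i^-:P_i\to\mathbb C^H_{-r}\otimes P_{r-2-i}$, $h_i\mapsto [i]!^{-2}\,1\otimes R_{i+r}$.
   Context: Fix a positive integer $r$. Set $q=e^{\pi\sqrt{-1}/r}$, $q^x=e^{\pi\sqrt{-1}x/r}$, $\{x\}=q^x-q^{-x}$, $[x]=\{x\}/\{1\}$, $[n]!=[n][n-1]\cdots[1]$. $\overline U=\overline U_q^H\mathfrak{sl}(2)$ is the Hopf algebra over $\mathbb C$ generated by $E,F,K,K^{-1},H$ with: - relations $KK^{-1}=K^{-1}K=1$, $KEK^{-1}=q^2E$, $KFK^{-1}=q^{-2}F$, $EF-FE=\frac{K-K^{-1}}{q-q^{-1}}$, $HK=KH$, $[H,E]=2E$, $[H,F]=-2F$, $E^r=F^r=0$; - coproduct $\Delta(E)=1\otimes E+E\otimes K$, $\Delta(F)=K^{-1}\otimes F+F\otimes1$, $\Delta(K)=K\otimes K$,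 $\Delta(H)=H\otimes1+1\otimes H$. $\mathcal C$ is the category of finite-dimensional weight modules ($H$ diagonalizable, $K=q^\lambda$ on weight-$\lambda$ vectors). $\mathbb C^H_{kr}$ is the one-dimensional module with $E=F=0$ and $H=kr$. Definition of $P_i$, for $i\in\{0,\dots,r-2\}$ (write $j=r-2-i$ and $\gamma_{n,k}=[k][n-k+1]$). $P_i$ has basis $h_m$ ($m=i,i-2,\dots,-i$), $s_m$ ($m=i,\dots,-i$), $R_m$ ($m=r+j,\dots,r-j$), $L_m$ ($m=j-r,\dots,-j-r$), each of weight $m$, with: - $Fh_m=h_{m-2}$ ($m>-i$), $Fh_{-i}=L_{j-r}$; - $Fs_m=s_{m-2}$ ($m>-i$), $Fs_{-i}=0$; - $FL_m=L_{m-2}$ ($m>-j-r$), $FL_{-j-r}=0$; - $FR_{r-j}=s_i$, $FR_{r-j+2k}=-\gamma_{j,k}R_{r-j+2k-2}$ ($1\le k\le j$); - $Eh_i=R_{r-j}$, $Eh_{i-2k}=\gamma_{i,k}h_{i-2k+2}+s_{i-2k+2}$ ($1\le k\le i$); - $Es_i=0$, $Es_{i-2k}=\gamma_{i,k}s_{i-2k+2}$; - $ER_m=R_{m+2}$ ($m<r+j$), $ER_{r+j}=0$; - $EL_{j-r}=s_{-i}$, $EL_{j-2k-r}=-\gamma_{j,k}L_{j-2k-r+2}$ ($1\le k\le j$). In $P_{r-2-i}$, the vectors $L_{i-r}$ and $R_{i+r}$ are the basis vectors of those weights. *)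

From HB Require Import structures.
From mathcomp Require Import all_boot all_order all_algebra.
From mathcomp Require Import complex.
From mathcomp Require Import reals trigo.
From Stdlib Require Import ClassicalEpsilon.

Unset Printing Implicit Defensive.

Import Order.TTheory GRing.Theory Num.Theory.
Local Open Scope ring_scope.

Section Defs.
Variable R : realType.
Local Notation C := (complex R).

Definition qq (r : nat) : C := Complex (cos (pi / r%:R)) (sin (pi / r%:R)).

Definition qpow (r : nat) (x : int) : C := qq r ^ x.
Definition qcurly (r : nat) (x : int) : C := qpow r x - qpow r (- x).
Definition qbr (r : nat) (x : int) : C := qcurly r x / qcurly r 1.
Definition qfact (r : nat) (n : nat) : C := \prod_(1 <= m < n.+1) qbr r m%:Z.
Definition gam (r n k : nat) : C := qbr r k%:Z * qbr r (n%:Z - k%:Z + 1).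

(* A finite-dimensional module over U = U_q^H sl(2), given in a fixed basis
   (column convention: the action of X on column vectors v is  X *m v),
   recorded by the matrices of the generators E, F, H, K, K^{-1}. *)
Record umod (n : nat) := UMod {
  actE : 'M[C]_n; actF : 'M[C]_n; actH : 'M[C]_n;
  actK : 'M[C]_n; actKi : 'M[C]_n }.
Arguments actE {n}. Arguments actF {n}. Arguments actH {n}.
Arguments actK {n}. Arguments actKi {n}. Arguments UMod {n}.

Definition is_mor {n : nat} (V W : umod n) (f : 'M[C]_n) : Prop :=
  [/\ f *m actE V = actE W *m f, f *m actF V = actF W *m f,
      f *m actH V = actH W *m f, f *m actK V = actK W *m f &
      f *m actKi V = actKi W *m f].

(* Basis of P_i (dimension 2r), with j = r-2-i, positions:
     h_{i-2a}       at a             (0 <= a <= i)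
     s_{i-2a}       at i+1+a         (0 <= a <= i)
     R_{r-j+2a}     at 2i+2+a        (0 <= a <= j)
     L_{j-r-2a}     at 2i+j+3+a      (0 <= a <= j)                          *)
Definition hI (i a : nat) : nat := a.
Definition sI (i a : nat) : nat := (i + 1 + a)%N.
Definition RI (i a : nat) : nat := (2 * i + 2 + a)%N.
Definition LI (r i a : nat) : nat := (2 * i + (r - 2 - i) + 3 + a)%N.

Definition dlt (p n : nat) : C := (p == n)%:R.

Definition coefE (r i : nat) (p c : nat) : C :=
  let j := (r - 2 - i)%N in
  if (c < i + 1)%N then
    let a := c in
    if a == 0%N then dlt p (RI i 0)
    else gam r i a * dlt p (hI i a.-1) + dlt p (sI i a.-1)
  else if (c < 2 * i + 2)%N then
    let a := (c - (i + 1))%N in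
    if a == 0%N then 0 else gam r i a * dlt p (sI i a.-1)
  else if (c < 2 * i + 2 + j + 1)%N then
    let a := (c - (2 * i + 2))%N in
    if (a < j)%N then dlt p (RI i a.+1) else 0
  else
    let a := (c - (2 * i + j + 3))%N in
    if a == 0%N then dlt p (sI i i)
    else - gam r j a * dlt p (LI r i a.-1).

Definition coefF (r i : nat) (p c : nat) : C :=
  let j := (r - 2 - i)%N in
  if (c < i + 1)%N then
    let a := c in
    if (a < i)%N then dlt p (hI i a.+1) else dlt p (LI r i 0)
  else if (c < 2 * i + 2)%N then
    let a := (c - (i + 1))%N in
    if (a < i)%N then dlt p (sI i a.+1) else 0
  else if (c < 2 * i + 2 + j + 1)%N then
    let a := (c - (2 * i + 2))%N in
    if a == 0%N then dlt p (sI i 0)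
    else - gam r j a * dlt p (RI i a.-1)
  else
    let a := (c - (2 * i + j + 3))%N in
    if (a < j)%N then dlt p (LI r i a.+1) else 0.

Definition wt (r i : nat) (c : nat) : int :=
  let j := (r - 2 - i)%N in
  if (c < i + 1)%N then i%:Z - 2 * c%:Z
  else if (c < 2 * i + 2)%N then i%:Z - 2 * (c - (i + 1))%N%:Z
  else if (c < 2 * i + 2 + j + 1)%N then
    r%:Z - j%:Z + 2 * (c - (2 * i + 2))%N%:Z
  else j%:Z - r%:Z - 2 * (c - (2 * i + j + 3))%N%:Z.

Definition Pmod (r i : nat) : umod (r.*2) :=
  UMod (\matrix_(p, c) coefE r i p c) (\matrix_(p, c) coefF r i p c)
       (\matrix_(p, c) ((p == c)%:R * (wt r i c)%:~R))
       (\matrix_(p, c) ((p == c)%:R * qpow r (wt r i c)))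
       (\matrix_(p, c) ((p == c)%:R * qpow r (- wt r i c))).

(* C^H_{kr} (x) V, identified with V via 1 (x) v <-> v, with the action
   given by the coproduct: E = 0, F = 0, H = kr, K = q^{kr} on C^H_{kr}:
     Delta(E) = 1(x)E + E(x)K       acts as  E
     Delta(F) = K^{-1}(x)F + F(x)1  acts as  q^{-kr} F
     Delta(H) = H(x)1 + 1(x)H       acts as  kr + H
     Delta(K^{+-1}) = K^{+-1}(x)K^{+-1}  acts as  q^{+-kr} K^{+-1}          *)
Definition tensC (r : nat) (k : int) {n : nat} (V : umod n) : umod n :=
  UMod (actE V) (qpow r (- (k * r%:Z)) *: actF V)
       ((k * r%:Z)%:~R%:M + actH V)
       (qpow r (k * r%:Z) *: actK V) (qpow r (- (k * r%:Z)) *: actKi V).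

Definition bvec (n c : nat) : 'cV[C]_n := \col_p (((p : nat) == c)%:R).

Definition mor_det (r i : nat) (W : umod (r.*2)) (v : 'cV[C]_(r.*2))
  : 'M[C]_(r.*2) :=
  epsilon (inhabits 0)
    (fun g => is_mor (Pmod r i) W g /\ g *m bvec (r.*2) (hI i 0) = v).

Definition Imor (r i : nat) := mor_det r i (tensC r 0 (Pmod r i)) (bvec _ (hI i 0)).
Definition xmor (r i : nat) := mor_det r i (tensC r 0 (Pmod r i)) (bvec _ (sI i 0)).
(* alpha_i^+ : P_i -> C^H_r (x) P_{r-2-i}, h_i |-> 1 (x) L_{i-r} *)
Definition alpha_plus (r i : nat) :=
  mor_det r i (tensC r 1 (Pmod r (r - 2 - i)))
          (bvec _ (LI r (r - 2 - i) 0)).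
(* alpha_i^- : P_i -> C^H_{-r} (x) P_{r-2-i}, h_i |-> [i]!^{-2} 1 (x) R_{i+r} *)
Definition alpha_minus (r i : nat) :=
  mor_det r i (tensC r (-1) (Pmod r (r - 2 - i)))
          ((qfact r i)^-2 *: bvec _ (RI (r - 2 - i) i)).

End Defs.

From Pilot Require Import Defs.
From mathcomp Require Import all_boot all_order all_algebra.
From mathcomp Require Import complex.
From mathcomp Require Import reals trigo.
From mathcomp Require Import zify lra.
From Stdlib Require Import ClassicalEpsilon.
Import Order.TTheory GRing.Theory Num.Theory.
Local Open Scope ring_scope.

(* [P_i] is cyclic on [h_i]: every basis vector is a word in [E] and [F]
   applied to [h_i].  Hence a morphism [f : P_i -> C^H_{kr} (x) P_l] is
   determined by [v = f h_i], a vector of [P_l] of weight [i - kr] which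
   satisfies the relations [E^{j+2} h_i = 0], [E F E h_i = 0],
   [F^{i+2} E h_i = 0] and [F E F^{i+1} h_i = 0] of [P_i].  A weight space of
   [P_l] is spanned by [h_a, s_a], by [R_a] or by [L_a], and on each of them
   the relations kill every vector except when [v] lies in [span(h_i, s_i)]
   with [k = 0], [l = i], or [v] is a multiple of [L_{i-r}] with [k = 1],
   [l = r-2-i], or of [R_{i+r}] with [k = -1], [l = r-2-i].  In each case [f]
   agrees on [h_i] with the announced combination of [I_i], [x_i],
   [alpha_i^+], [alpha_i^-], hence equals it. *)

Section QNumbers.
Context {R : realType}.
Local Notation C := (complex R).

Lemma qq_expr (r n : nat) :
  qq R r ^+ n = Complex (cos (n%:R * (pi / r%:R))) (sin (n%:R * (pi / r%:R))).
Proof.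
set t := pi / r%:R; elim: n => [|n IH]; first by rewrite expr0 mul0r cos0 sin0.
rewrite exprS IH /qq -/t mulrSr mulrDl mul1r cosD sinD.
by congr Complex => /=; lra.
Qed.

Lemma sin_mulpi_gt0 {r n : nat} :
  (0 < n < r)%N -> 0 < sin (n%:R * (pi / r%:R) : R).
Proof.
case/andP=> n_gt0 n_lt_r; apply: sin_gt0_pi; apply/andP; split.
  by rewrite mulr_gt0 ?divr_gt0 ?pi_gt0 ?ltr0n //; lia.
by rewrite mulrCA gtr_pMr ?pi_gt0 // ltr_pdivrMr ?ltr0n ?mul1r ?ltr_nat //; lia.
Qed.

(* With [w = q^n = cos t + i sin t] and [sin t > 0], [w = w^-1] would force
   [w^2 = 1], whose imaginary part [2 sin t cos t] gives [cos t = 0] and then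
   [Re w^2 = -(sin t)^2 < 0]. *)
Lemma qcurly_neq0 {r n : nat} : (0 < n < r)%N -> qcurly R r n != 0.
Proof.
move=> n_range; have s_gt0 := sin_mulpi_gt0 n_range.
rewrite /qcurly /qpow -exprnN -exprnP subr_eq0.
set w := qq R r ^+ n; have wE : w = _ := qq_expr r n.
have w_neq0 : w != 0 by rewrite wE eq_complex negb_and (gt_eqF s_gt0) orbT.
apply/eqP => w_inv; have : w * w = 1 by rewrite {2}w_inv mulfV.
move: s_gt0; rewrite wE; set c := cos _; set s := sin _ => s_gt0 /eqP.
rewrite eq_complex /= => /andP[/eqP re_eq /eqP im_eq].
have c0 : c = 0.
  by apply: (mulIf (lt0r_neq0 s_gt0)); rewrite mul0r; lra.
by move: re_eq; rewrite c0; nra.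
Qed.

Lemma qbr_neq0 {r n : nat} : (0 < n < r)%N -> qbr R r n != 0.
Proof.
by move=> n_range; rewrite /qbr mulf_neq0 ?invr_eq0 ?qcurly_neq0 //; lia.
Qed.

Lemma gam_neq0 {r n a : nat} : (0 < a <= n)%N -> (n + 2 <= r)%N -> gam R r n a != 0.
Proof.
move=> a_range n_lt; rewrite /gam; have -> : n%:Z - a%:Z + 1 = (n - a).+1%:Z by lia.
by rewrite mulf_neq0 ?qbr_neq0 //; lia.
Qed.

Lemma qfact_neq0 {r n : nat} : (n < r)%N -> qfact R r n != 0.
Proof.
elim: n => [|n IH] n_lt; first by rewrite /qfact big_geq ?oner_neq0.
by rewrite /qfact big_nat_recr //= mulf_neq0 ?IH ?qbr_neq0 //; lia.
Qed.

Lemma qpow_neq0 (r : nat) (x : int) : (1 < r)%N -> qpow R r x != 0.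
Proof.
move=> r_gt1; rewrite expfz_neq0 // -[qq R r]expr1 qq_expr eq_complex negb_and.
by apply/orP; right; apply/lt0r_neq0/(@sin_mulpi_gt0 r 1); rewrite r_gt1.
Qed.

End QNumbers.

Section BasisVectors.
Context {R : realType} {n : nat}.
Local Notation C := (complex R).
Local Notation b := (bvec R n).

Lemma mulmx_bvec (M : nat -> nat -> C) (c : nat) : (c < n)%N ->
  (\matrix_(p < n, q < n) M p q) *m b c = \col_(p < n) M p c.
Proof.
move=> c_lt; apply/matrixP => p q; rewrite !mxE (bigD1 (Ordinal c_lt)) //=.
rewrite !mxE eqxx mulr1 big1 ?addr0 // => c' /negP c'_neq; rewrite !mxE.
by case: eqP => [c'_eq|]; [case: c'_neq; apply/eqP/val_inj | rewrite mulr0].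
Qed.

Lemma mulmx_bvecE (A : 'M[C]_n) (c p : 'I_n) : (A *m b c) p 0 = A p c.
Proof.
rewrite !mxE (bigD1 c) //= !mxE eqxx mulr1 big1 ?addr0 // => c' c'_neq.
by rewrite !mxE; case: eqP => [c'_eq|]; [case/eqP: c'_neq; apply/val_inj | rewrite mulr0].
Qed.

Lemma mx_eq0_bvec (A : 'M[C]_n) : (forall c, (c < n)%N -> A *m b c = 0) -> A = 0.
Proof.
by move=> Ab0; apply/matrixP => p c; rewrite -mulmx_bvecE Ab0 // !mxE.
Qed.

Lemma scale_bvec_eq0 {p : nat} {d : C} : (p < n)%N -> d *: b p = 0 -> d = 0.
Proof. by move=> p_lt /matrixP/(_ (Ordinal p_lt) 0); rewrite !mxE /= eqxx mulr1. Qed.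

Lemma scale_bvec2_eq0 {p1 p2 : nat} {x y : C} : (p1 < n)%N -> (p2 < n)%N ->
  p1 != p2 -> x *: b p1 + y *: b p2 = 0 -> x = 0 /\ y = 0.
Proof.
move=> p1_lt p2_lt /negbTE p12 /matrixP xy0; split.
  by move: (xy0 (Ordinal p1_lt) 0); rewrite !mxE /= eqxx p12 mulr0 mulr1 addr0.
by move: (xy0 (Ordinal p2_lt) 0); rewrite !mxE /= eqxx eq_sym p12 mulr0 mulr1 add0r.
Qed.

Lemma cV_on_bvec1 (w : 'cV[C]_n) (p : nat) (p_lt : (p < n)%N) :
  (forall q : 'I_n, w q 0 != 0 -> q = p :> nat) -> w = w (Ordinal p_lt) 0 *: b p.
Proof.
move=> w_on; apply/matrixP => q z; rewrite (ord1 z) !mxE.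
case: eqP => [q_eq|q_neq]; first by rewrite mulr1 (_ : q = Ordinal p_lt) //; exact/val_inj.
by rewrite mulr0; apply/eqP; apply: contraT => /w_on.
Qed.

Lemma cV_on_bvec2 (w : 'cV[C]_n) (p1 p2 : nat) (p1_lt : (p1 < n)%N) (p2_lt : (p2 < n)%N) :
  p1 != p2 -> (forall q : 'I_n, w q 0 != 0 -> q = p1 :> nat \/ q = p2 :> nat) ->
  w = w (Ordinal p1_lt) 0 *: b p1 + w (Ordinal p2_lt) 0 *: b p2.
Proof.
move=> /negbTE p12 w_on; apply/matrixP => q z; rewrite (ord1 z) !mxE.
case: eqP => [q_eq|q_neq1].
  rewrite q_eq p12 mulr1 mulr0 addr0 (_ : q = Ordinal p1_lt) //; exact/val_inj.
case: eqP => [q_eq|q_neq2].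
  rewrite mulr1 mulr0 add0r (_ : q = Ordinal p2_lt) //; exact/val_inj.
by rewrite !mulr0 addr0; apply/eqP; apply: contraT => /w_on [].
Qed.

Lemma diag_mx_eigen (d : nat -> C) {v : 'cV[C]_n} {m : C} :
  (\matrix_(p < n, c < n) ((p == c)%:R * d c)) *m v = m *: v ->
  forall q : 'I_n, v q 0 != 0 -> d q = m.
Proof.
move=> /matrixP Dv q vq; move: (Dv q 0); rewrite !mxE (bigD1 q) //= !mxE eqxx mul1r.
rewrite big1 ?addr0 => [|c /negbTE c_neq]; first exact: mulIf.
by rewrite !mxE eq_sym c_neq !mul0r.
Qed.

Lemma exprZ_mx (A : 'M[C]_n) (e : C) (m : nat) : (e *: A) ^+ m = e ^+ m *: A ^+ m.
Proof.
elim: m => [|m IH]; first by rewrite !expr0 scale1r.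
by rewrite !exprS IH -!mulmxE -scalemxAl -scalemxAr scalerA.
Qed.

Lemma mulmxXS (A : 'M[C]_n) (m : nat) (v : 'cV[C]_n) :
  A ^+ m.+1 *m v = A *m (A ^+ m *m v).
Proof. by rewrite exprS -mulmxE mulmxA. Qed.

Lemma mulmxXSr (A : 'M[C]_n) (m : nat) (v : 'cV[C]_n) :
  A ^+ m.+1 *m v = A ^+ m *m (A *m v).
Proof. by rewrite exprSr -mulmxE mulmxA. Qed.

Lemma mulmxXD (A : 'M[C]_n) (m p : nat) (v : 'cV[C]_n) :
  A ^+ (m + p) *m v = A ^+ m *m (A ^+ p *m v).
Proof. by rewrite exprD -mulmxE mulmxA. Qed.

End BasisVectors.

Lemma basis_index_cases {r l c : nat} : (l + 2 <= r)%N -> (c < r.*2)%N ->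
  [\/ exists2 a, (a <= l)%N & c = hI l a, exists2 a, (a <= l)%N & c = sI l a,
      exists2 a, (a <= r - 2 - l)%N & c = RI l a
    | exists2 a, (a <= r - 2 - l)%N & c = LI r l a].
Proof.
move=> l_lt c_lt; rewrite /hI /sI /RI /LI.
have [c_h|c_h] := ltnP c (l + 1); first by constructor 1; exists c => //; lia.
have [c_s|c_s] := ltnP c (2 * l + 2).
  by constructor 2; exists (c - (l + 1))%N; lia.
have [c_R|c_R] := ltnP c (2 * l + 2 + (r - 2 - l) + 1).
  by constructor 3; exists (c - (2 * l + 2))%N; lia.
by constructor 4; exists (c - (2 * l + (r - 2 - l) + 3))%N; lia.
Qed.

Lemma int_mul_nat_cases (k : int) (r : nat) :
  [\/ k = 0, k = 1, k = -1 | 2 * r%:Z <= k * r%:Z \/ k * r%:Z <= - (2 * r%:Z)].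
Proof.
have [k_le|k_gt] := lerP k (-2); first by constructor 4; right; nia.
have [k_ge|k_lt] := lerP 2 k; first by constructor 4; left; nia.
have : k = 0 \/ k = 1 \/ k = -1 by lia.
by case=> [|[|]] ->; constructor.
Qed.

Ltac case_ifs := repeat (case: ifP => /= ?; try (exfalso; lia)).

Section Weights.
Context {r l : nat}.
Hypothesis l_lt : (l + 2 <= r)%N.

Lemma wt_h a : (a <= l)%N -> wt r l (hI l a) = l%:Z - 2 * a%:Z.
Proof. by move=> a_le; rewrite /wt /hI; case_ifs. Qed.

Lemma wt_s a : (a <= l)%N -> wt r l (sI l a) = l%:Z - 2 * a%:Z.
Proof. by move=> a_le; rewrite /wt /sI; case_ifs; lia. Qed.

Lemma wt_R a : (a <= r - 2 - l)%N -> wt r l (RI l a) = l%:Z + 2 + 2 * a%:Z.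
Proof. by move=> a_le; rewrite /wt /RI; case_ifs; lia. Qed.

Lemma wt_L a : (a <= r - 2 - l)%N -> wt r l (LI r l a) = - (l%:Z + 2 + 2 * a%:Z).
Proof. by move=> a_le; rewrite /wt /LI; case_ifs; lia. Qed.

(* [wt_h] must be tried last: since [hI l a = a], it matches any [wt r l _]. *)
Lemma wt_eq_hs (q a : nat) : (q < r.*2)%N -> (a <= l)%N ->
  wt r l q = l%:Z - 2 * a%:Z -> q = hI l a \/ q = sI l a.
Proof.
move=> q_lt a_le; case: (basis_index_cases l_lt q_lt) => -[a' a'_le ->];
  rewrite ?wt_s ?wt_R ?wt_L ?wt_h //; rewrite /hI /sI; lia.
Qed.

Lemma wt_eq_R (q a : nat) : (q < r.*2)%N -> (a <= r - 2 - l)%N ->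
  wt r l q = l%:Z + 2 + 2 * a%:Z -> q = RI l a.
Proof.
move=> q_lt a_le; case: (basis_index_cases l_lt q_lt) => -[a' a'_le ->];
  rewrite ?wt_s ?wt_R ?wt_L ?wt_h //; rewrite /RI; lia.
Qed.

Lemma wt_eq_L (q a : nat) : (q < r.*2)%N -> (a <= r - 2 - l)%N ->
  wt r l q = - (l%:Z + 2 + 2 * a%:Z) -> q = LI r l a.
Proof.
move=> q_lt a_le; case: (basis_index_cases l_lt q_lt) => -[a' a'_le ->];
  rewrite ?wt_s ?wt_R ?wt_L ?wt_h //; rewrite /LI; lia.
Qed.

End Weights.

Ltac solve_index := first [ reflexivity | lia | (f_equal; solve_index) ].

Section ActionOnBasis.
Context {R : realType} {r l : nat}.
Hypothesis l_lt : (l + 2 <= r)%N.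
Local Notation C := (complex R).
Local Notation b := (bvec R r.*2).
Local Notation E := (actE R _ (Pmod R r l)).
Local Notation F := (actF R _ (Pmod R r l)).
Local Notation H := (actH R _ (Pmod R r l)).
Local Notation j := (r - 2 - l)%N.

Lemma E_bvec c : (c < r.*2)%N -> E *m b c = \col_p Defs.coefE R r l p c.
Proof. by move=> c_lt; rewrite /Pmod /= mulmx_bvec. Qed.
Lemma F_bvec c : (c < r.*2)%N -> F *m b c = \col_p coefF R r l p c.
Proof. by move=> c_lt; rewrite /Pmod /= mulmx_bvec. Qed.

Ltac act := rewrite ?E_bvec ?F_bvec; last (rewrite /hI /sI /RI /LI; lia);
  apply/matrixP => p q; rewrite !mxE /Defs.coefE /coefF /dlt /hI /sI /RI /LI /=; case_ifs;
  rewrite ?mulr0 ?mul0r ?addr0 ?add0r ?mulr1 ?mul1r ?mulNr; try solve_index.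

Lemma F_h {a} : (a < l)%N -> F *m b (hI l a) = b (hI l a.+1).
Proof. by move=> a_lt; act. Qed.
Lemma F_h_last : F *m b (hI l l) = b (LI r l 0).
Proof. by act. Qed.
Lemma F_s {a} : (a < l)%N -> F *m b (sI l a) = b (sI l a.+1).
Proof. by move=> a_lt; act. Qed.
Lemma F_s_last : F *m b (sI l l) = 0.
Proof. by act. Qed.
Lemma F_R0 : F *m b (RI l 0) = b (sI l 0).
Proof. by act. Qed.
Lemma F_R {a} : (0 < a <= j)%N -> F *m b (RI l a) = - gam R r j a *: b (RI l a.-1).
Proof. by case/andP=> a_gt0 a_le; act. Qed.
Lemma F_L {a} : (a < j)%N -> F *m b (LI r l a) = b (LI r l a.+1).
Proof. by move=> a_lt; act. Qed.

Lemma E_h0 : E *m b (hI l 0) = b (RI l 0).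
Proof. by act. Qed.
Lemma E_h {a} : (0 < a <= l)%N ->
  E *m b (hI l a) = gam R r l a *: b (hI l a.-1) + b (sI l a.-1).
Proof. by case/andP=> a_gt0 a_le; act. Qed.
Lemma E_s0 : E *m b (sI l 0) = 0.
Proof. by act. Qed.
Lemma E_s {a} : (0 < a <= l)%N -> E *m b (sI l a) = gam R r l a *: b (sI l a.-1).
Proof. by case/andP=> a_gt0 a_le; act. Qed.
Lemma E_R {a} : (a < j)%N -> E *m b (RI l a) = b (RI l a.+1).
Proof. by move=> a_lt; act. Qed.
Lemma E_R_last : E *m b (RI l j) = 0.
Proof. by act. Qed.
Lemma E_L0 : E *m b (LI r l 0) = b (sI l l).
Proof. by act. Qed.
Lemma E_L {a} : (0 < a <= j)%N -> E *m b (LI r l a) = - gam R r j a *: b (LI r l a.-1).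
Proof. by case/andP=> a_gt0 a_le; act. Qed.

Lemma H_bvec {c} : (c < r.*2)%N -> H *m b c = (wt r l c)%:~R *: b c.
Proof.
move=> c_lt; apply/matrixP => p z; rewrite (ord1 z).
rewrite -[bvec _ _ c]/(b (Ordinal c_lt)) mulmx_bvecE !mxE /= mulrC.
case: (eqVneq p (Ordinal c_lt)) => [->|p_neq]; first by rewrite !eqxx.
by move: p_neq; rewrite -val_eqE /= => /negbTE ->; rewrite !mulr0.
Qed.

Lemma FX_s {c m} : (c + m <= l)%N -> F ^+ m *m b (sI l c) = b (sI l (c + m)).
Proof.
elim: m => [|m IH] cm_le; first by rewrite expr0 mul1mx addn0.
by rewrite mulmxXS IH ?F_s ?addnS //; lia.
Qed.

Lemma FX_L {c m} : (c + m <= j)%N -> F ^+ m *m b (LI r l c) = b (LI r l (c + m)).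
Proof.
elim: m => [|m IH] cm_le; first by rewrite expr0 mul1mx addn0.
by rewrite mulmxXS IH ?F_L ?addnS //; lia.
Qed.

Lemma EX_s {c m} : (m <= c <= l)%N ->
  exists2 d, d != 0 & E ^+ m *m b (sI l c) = d *: b (sI l (c - m)).
Proof.
elim: m => [|m IH] /andP[m_le c_le].
  by exists 1; rewrite ?oner_neq0 // expr0 mul1mx scale1r subn0.
have [|d d_neq0 Ed] := IH; first by apply/andP; lia.
exists (d * gam R r l (c - m)); first by rewrite mulf_neq0 ?gam_neq0 //; lia.
rewrite mulmxXS Ed -scalemxAr E_s ?scalerA; last lia.
by rewrite -(subnSK m_le).
Qed.

Lemma EX_L {c m} : (m <= c <= j)%N ->
  exists2 d, d != 0 & E ^+ m *m b (LI r l c) = d *: b (LI r l (c - m)).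
Proof.
elim: m => [|m IH] /andP[m_le c_le].
  by exists 1; rewrite ?oner_neq0 // expr0 mul1mx scale1r subn0.
have [|d d_neq0 Ed] := IH; first by apply/andP; lia.
exists (d * - gam R r j (c - m)).
  by rewrite mulf_neq0 ?oppr_eq0 ?gam_neq0 //; lia.
rewrite mulmxXS Ed -scalemxAr E_L ?scalerA; last lia.
by rewrite -(subnSK m_le).
Qed.

Lemma weight_vector_cases {v : 'cV[C]_(r.*2)} {m : int} :
  H *m v = m%:~R *: v -> v != 0 ->
  [\/ exists a x y, [/\ (a <= l)%N, m = l%:Z - 2 * a%:Z
                      & v = x *: b (hI l a) + y *: b (sI l a)],
      exists a c, [/\ (a <= j)%N, m = l%:Z + 2 + 2 * a%:Z & v = c *: b (RI l a)]
    | exists a c, [/\ (a <= j)%N, m = - (l%:Z + 2 + 2 * a%:Z) & v = c *: b (LI r l a)]].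
Proof.
move=> Hv v_neq0.
have wt_supp q : v q 0 != 0 -> wt r l q = m.
  by move/(diag_mx_eigen (fun c => (wt r l c)%:~R) Hv q)/intr_inj.
have [p vp] : exists p : 'I_(r.*2), v p 0 != 0.
  apply/existsP; apply: contraNT v_neq0 => /existsPn v0.
  by apply/eqP/matrixP => q z; rewrite (ord1 z) mxE; exact/eqP/negbNE/v0.
case: (basis_index_cases l_lt (ltn_ord p)) => -[a a_le p_eq];
  move: (wt_supp p vp); rewrite p_eq ?wt_s ?wt_R ?wt_L ?wt_h // => m_eq.
1,2: have h_lt : (hI l a < r.*2)%N by rewrite /hI; lia.
1,2: have s_lt : (sI l a < r.*2)%N by rewrite /sI; lia.
1,2: constructor 1; exists a, (v (Ordinal h_lt) 0), (v (Ordinal s_lt) 0); split => //;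
  apply: cV_on_bvec2 => [|q /wt_supp]; [by rewrite /hI /sI; apply/eqP; lia |
                                        by rewrite -m_eq; apply: wt_eq_hs].
- have R_lt : (RI l a < r.*2)%N by rewrite /RI; lia.
  constructor 2; exists a, (v (Ordinal R_lt) 0); split => //.
  by apply: cV_on_bvec1 => q /wt_supp; rewrite -m_eq; apply: wt_eq_R.
- have L_lt : (LI r l a < r.*2)%N by rewrite /LI; lia.
  constructor 3; exists a, (v (Ordinal L_lt) 0); split => //.
  by apply: cV_on_bvec1 => q /wt_supp; rewrite -m_eq; apply: wt_eq_L.
Qed.

End ActionOnBasis.

Lemma mulmx_intertwineX (R : realType) (n m : nat) (A B f : 'M[complex R]_n)
    (x : 'cV[complex R]_n) :
  f *m A = B *m f -> f *m (A ^+ m *m x) = B ^+ m *m (f *m x).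
Proof.
move=> fAB; elim: m => [|m IH]; first by rewrite !expr0 !mul1mx.
by rewrite !mulmxXS -IH !mulmxA fAB.
Qed.

Section Morphisms.
Context {R : realType} {n : nat} {V W : umod R n}.
Local Notation C := (complex R).

Lemma is_morZ {f : 'M[C]_n} (a : C) : is_mor R V W f -> is_mor R V W (a *: f).
Proof.
by case=> fE fF fH fK fKi; split; rewrite -scalemxAl -scalemxAr ?fE ?fF ?fH ?fK ?fKi.
Qed.

Lemma is_morB {f g : 'M[C]_n} :
  is_mor R V W f -> is_mor R V W g -> is_mor R V W (f - g).
Proof.
case=> fE fF fH fK fKi [gE gF gH gK gKi]; split;
by rewrite mulmxBl mulmxBr ?fE ?fF ?fH ?fK ?fKi ?gE ?gF ?gH ?gK ?gKi.
Qed.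

Context {f : 'M[C]_n}.
Hypothesis f_mor : is_mor R V W f.

Lemma mor_EX m (x : 'cV[C]_n) : f *m (actE R _ V ^+ m *m x) = actE R _ W ^+ m *m (f *m x).
Proof. by case: f_mor => fE _ _ _ _; apply: mulmx_intertwineX. Qed.

Lemma mor_FX m (x : 'cV[C]_n) : f *m (actF R _ V ^+ m *m x) = actF R _ W ^+ m *m (f *m x).
Proof. by case: f_mor => _ fF _ _ _; apply: mulmx_intertwineX. Qed.

Lemma mor_E (x : 'cV[C]_n) : f *m (actE R _ V *m x) = actE R _ W *m (f *m x).
Proof. by have := mor_EX 1 x; rewrite !expr1. Qed.

Lemma mor_F (x : 'cV[C]_n) : f *m (actF R _ V *m x) = actF R _ W *m (f *m x).
Proof. by have := mor_FX 1 x; rewrite !expr1. Qed.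

Lemma mor_H_eigen {x : 'cV[C]_n} {m : C} :
  actH R _ V *m x = m *: x -> actH R _ W *m (f *m x) = m *: (f *m x).
Proof. by case: f_mor => _ _ fH _ _ Hx; rewrite mulmxA -fH -mulmxA Hx scalemxAr. Qed.

End Morphisms.

(* Relations satisfied by the generator [h_i] of [P_i]; they are all that is
   needed to locate the image of [h_i] under a morphism. *)
Definition hi_relations {R : realType} (r i : nat) {n : nat} (E F : 'M[complex R]_n)
    (v : 'cV[complex R]_n) : Prop :=
  [/\ E ^+ (r - 2 - i).+2 *m v = 0, E *m (F *m (E *m v)) = 0,
      F ^+ i.+2 *m (E *m v) = 0 & F *m (E *m (F ^+ i.+1 *m v)) = 0].

Lemma hi_relations_mor {R : realType} {r i n : nat} {V W : umod R n}
    {f : 'M[complex R]_n} {x : 'cV[complex R]_n} :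
  is_mor R V W f -> hi_relations r i (actE R _ V) (actF R _ V) x ->
  hi_relations r i (actE R _ W) (actF R _ W) (f *m x).
Proof.
move=> f_mor [rel1 rel2 rel3 rel4]; split.
- by move: (congr1 (mulmx f) rel1); rewrite (mor_EX f_mor) mulmx0.
- move: (congr1 (mulmx f) rel2).
  by rewrite (mor_E f_mor) (mor_F f_mor) (mor_E f_mor) mulmx0.
- by move: (congr1 (mulmx f) rel3); rewrite (mor_FX f_mor) (mor_E f_mor) mulmx0.
- move: (congr1 (mulmx f) rel4).
  by rewrite (mor_F f_mor) (mor_E f_mor) (mor_FX f_mor) mulmx0.
Qed.

Lemma hi_relations_scaleF {R : realType} {r i n : nat} {E F : 'M[complex R]_n}
    {e : complex R} {v : 'cV[complex R]_n} :
  e != 0 -> hi_relations r i E (e *: F) v -> hi_relations r i E F v.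
Proof.
move=> e_neq0 [rel1 rel2 rel3 rel4]; split; first exact: rel1.
- move: rel2; rewrite -scalemxAl -scalemxAr => /eqP.
  by rewrite scaler_eq0 (negbTE e_neq0) => /eqP.
- move: rel3; rewrite exprZ_mx -scalemxAl => /eqP.
  by rewrite scaler_eq0 expf_eq0 (negbTE e_neq0) andbF => /eqP.
- move: rel4; rewrite exprZ_mx -!scalemxAl -!scalemxAr scalerA => /eqP.
  by rewrite scaler_eq0 mulf_eq0 expf_eq0 (negbTE e_neq0) andbF => /eqP.
Qed.

Section GeneratedByTop.
Context {R : realType} {r i : nat}.
Hypothesis i_lt : (i + 2 <= r)%N.
Local Notation b := (bvec R r.*2).
Local Notation E := (actE R _ (Pmod R r i)).
Local Notation F := (actF R _ (Pmod R r i)).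
Local Notation h0 := (b (hI i 0)).
Local Notation j := (r - 2 - i)%N.

Lemma bvec_h a : (a <= i)%N -> b (hI i a) = F ^+ a *m h0.
Proof.
elim: a => [|a IH] a_le; first by rewrite expr0 mul1mx.
by rewrite mulmxXS -IH ?(F_h i_lt) //; lia.
Qed.

Lemma bvec_L a : (a <= j)%N -> b (LI r i a) = F ^+ (a + i.+1) *m h0.
Proof.
elim: a => [|a IH] a_le; first by rewrite add0n mulmxXS -bvec_h ?(F_h_last i_lt).
by rewrite addSn mulmxXS -IH ?(F_L i_lt) //; lia.
Qed.

Lemma bvec_R a : (a <= j)%N -> b (RI i a) = E ^+ a.+1 *m h0.
Proof.
elim: a => [|a IH] a_le; first by rewrite expr1 (E_h0 i_lt).
by rewrite mulmxXS -IH ?(E_R i_lt) //; lia.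
Qed.

Lemma bvec_s a : (a <= i)%N -> b (sI i a) = F ^+ a *m (F *m (E *m h0)).
Proof.
elim: a => [|a IH] a_le; first by rewrite expr0 mul1mx (E_h0 i_lt) (F_R0 i_lt).
by rewrite mulmxXS -IH ?(F_s i_lt) //; lia.
Qed.

Lemma Pmod_hi_relations : hi_relations r i E F h0.
Proof.
split.
- by rewrite mulmxXS -bvec_R ?(E_R_last i_lt) ?mulmx0.
- by rewrite (E_h0 i_lt) (F_R0 i_lt) (E_s0 i_lt).
- by rewrite mulmxXS mulmxXSr -bvec_s ?(F_s_last i_lt).
- by rewrite -[F ^+ i.+1 *m _](@bvec_L 0) ?(E_L0 i_lt) ?(F_s_last i_lt).
Qed.

Lemma mor_eq0 {W : umod R r.*2} {f : 'M[complex R]_(r.*2)} :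
  is_mor R (Pmod R r i) W f -> f *m h0 = 0 -> f = 0.
Proof.
move=> f_mor v0; apply: mx_eq0_bvec => c c_lt.
case: (basis_index_cases i_lt c_lt) => -[a a_le ->].
- by rewrite bvec_h ?(mor_FX f_mor) ?v0 ?mulmx0.
- by rewrite bvec_s ?(mor_FX f_mor) ?(mor_F f_mor) ?(mor_E f_mor) ?v0 ?mulmx0.
- by rewrite bvec_R ?(mor_EX f_mor) ?v0 ?mulmx0.
- by rewrite bvec_L ?(mor_FX f_mor) ?v0 ?mulmx0.
Qed.

End GeneratedByTop.

(* The weight equations below leave [k] in [{0, 1, -1}], since [|k r| >= 2 r]
   would put [i] or [l] out of [[0, r - 2]]. *)
Ltac solve_by_weight k r :=
  case: (int_mul_nat_cases k r) => [?|?|?|[?|?]]; try subst k; lia.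

Section HiRelationsInP.
Context {R : realType} {r l i : nat}.
Variable k : int.
Context {v : 'cV[complex R]_(r.*2)}.
Hypotheses (i_lt : (i + 2 <= r)%N) (l_lt : (l + 2 <= r)%N).
Local Notation b := (bvec R r.*2).
Local Notation E := (actE R _ (Pmod R r l)).
Local Notation F := (actF R _ (Pmod R r l)).
Hypothesis v_rels : hi_relations r i E F v.
Hypothesis v_neq0 : v != 0.

Lemma hi_relations_R {a c} : (a <= r - 2 - l)%N -> v = c *: b (RI l a) ->
  i%:Z = k * r%:Z + (l%:Z + 2 + 2 * a%:Z) ->
  [/\ a = (r - 2 - l)%N, k = -1 & l = (r - 2 - i)%N].
Proof.
move=> a_le vE wt_v; case: v_rels => _ rel2 _ _.
have [a_lt|a_ge] := ltnP a (r - 2 - l); last first.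
  by split; [lia | solve_by_weight k r | solve_by_weight k r].
have aS : (0 < a.+1 <= r - 2 - l)%N by apply/andP; lia.
move: rel2; rewrite vE -!scalemxAr (E_R l_lt a_lt) (F_R l_lt aS) -scalemxAr.
rewrite (E_R l_lt a_lt) scalerA => /scale_bvec_eq0 cg0.
have g_neq0 : - gam R r (r - 2 - l) a.+1 != 0 by rewrite oppr_eq0 gam_neq0 //; lia.
case/eqP: v_neq0; rewrite vE (mulIf g_neq0 (_ : c * _ = 0 * _)) ?scale0r // mul0r cg0 //.
by rewrite /RI; lia.
Qed.

Lemma hi_relations_hs {a x y} :
  (a <= l)%N -> v = x *: b (hI l a) + y *: b (sI l a) ->
  i%:Z = k * r%:Z + (l%:Z - 2 * a%:Z) -> [/\ a = 0%N, k = 0 & l = i].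
Proof.
move=> a_le vE wt_v; case: v_rels => rel1 rel2 rel3 _.
case: a => [|a] in a_le vE wt_v *.
  by split => //; solve_by_weight k r.
have aS : (0 < a.+1 <= l)%N by apply/andP; lia.
have a_lt : (a < l)%N by lia.
have g_neq0 : gam R r l a.+1 != 0 by apply: gam_neq0; lia.
set g := gam R r l a.+1 in g_neq0.
have h_lt : (hI l a < r.*2)%N by rewrite /hI; lia.
have s_lt : (sI l a < r.*2)%N by rewrite /sI; lia.
have hs_neq : hI l a != sI l a by rewrite /hI /sI; apply/eqP; lia.
have Ev : E *m v = (x * g) *: b (hI l a) + (x + y * g) *: b (sI l a).
  rewrite vE mulmxDr -!scalemxAr (E_h l_lt aS) (E_s l_lt aS).
  by rewrite scalerDr !scalerA scalerDl addrA.
have EFEv : E *m (F *m (E *m v)) =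
    (x * g * g) *: b (hI l a) + (x * g + (x + y * g) * g) *: b (sI l a).
  rewrite Ev mulmxDr -!scalemxAr (F_h l_lt a_lt) (F_s l_lt a_lt).
  rewrite mulmxDr -!scalemxAr (E_h l_lt aS) (E_s l_lt aS).
  by rewrite scalerDr !scalerA -addrA -scalerDl.
have x0 : x = 0.
  move: rel2; rewrite EFEv => /(scale_bvec2_eq0 h_lt s_lt hs_neq) [xgg0 _].
  by apply: (mulIf g_neq0); apply: (mulIf g_neq0); rewrite xgg0 !mul0r.
have y0 : y = 0.
  move: Ev; rewrite x0 mul0r add0r scale0r add0r => Ev.
  have [fits|overflows] := leqP (a + i.+2) l.
    move: rel3; rewrite Ev -scalemxAr (FX_s l_lt fits) => /scale_bvec_eq0 yg0.
    by apply: (mulIf g_neq0); rewrite mul0r yg0 // /sI; lia.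
  have top : ((r - 2 - i).+2 <= a.+1 <= l)%N.
    by apply/andP; split; [solve_by_weight k r | lia].
  have [d d_neq0 Ed] := EX_s (R := R) l_lt top.
  move: rel1; rewrite vE x0 scale0r add0r -scalemxAr Ed scalerA.
  move=> /scale_bvec_eq0 yd0.
  by apply: (mulIf d_neq0); rewrite mul0r yd0 // /sI; lia.
by case/eqP: v_neq0; rewrite vE x0 y0 !scale0r addr0.
Qed.

Lemma hi_relations_L {a c} : (a <= r - 2 - l)%N -> v = c *: b (LI r l a) ->
  i%:Z = k * r%:Z - (l%:Z + 2 + 2 * a%:Z) ->
  [/\ a = 0%N, k = 1 & l = (r - 2 - i)%N].
Proof.
move=> a_le vE wt_v; case: v_rels => rel1 _ _ rel4.
case: a => [|a] in a_le vE wt_v *.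
  by split => //; solve_by_weight k r.
suff c0 : c = 0 by case/eqP: v_neq0; rewrite vE c0 scale0r.
have [fits|overflows] := leqP (a.+1 + i.+1) (r - 2 - l).
  have top : (0 < a.+1 + i.+1 <= r - 2 - l)%N by apply/andP; lia.
  have below : ((a.+1 + i.+1).-1 < r - 2 - l)%N by lia.
  have g_neq0 : - gam R r (r - 2 - l) (a.+1 + i.+1) != 0.
    by rewrite oppr_eq0 gam_neq0 //; lia.
  move: rel4; rewrite vE -!scalemxAr (FX_L l_lt fits) (E_L l_lt top) -scalemxAr.
  rewrite (F_L l_lt below) scalerA => /scale_bvec_eq0 cg0.
  by apply: (mulIf g_neq0); rewrite mul0r cg0 // /LI; lia.
have [deep|shallow] := leqP (r - 2 - i).+2 a.+1.
  have [|d d_neq0 Ed] :=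
    EX_L (R := R) l_lt (_ : ((r - 2 - i).+2 <= a.+1 <= r - 2 - l)%N).
    by apply/andP.
  move: rel1; rewrite vE -scalemxAr Ed scalerA => /scale_bvec_eq0 cd0.
  by apply: (mulIf d_neq0); rewrite mul0r cd0 // /LI; lia.
(* [E^(r-i)] moves [L_a] down to [L_0], then to [s_l], then down the [s]-chain. *)
have [|d1 d1_neq0 Ed1] := EX_L (R := R) l_lt (_ : (a.+1 <= a.+1 <= r - 2 - l)%N).
  by apply/andP.
have [|d2 d2_neq0 Ed2] :=
  EX_s (R := R) l_lt (_ : ((r - 2 - i).+2 - a.+2 <= l <= l)%N).
  by apply/andP; split => //; solve_by_weight k r.
move: rel1; rewrite (_ : (r - 2 - i).+2 = ((r - 2 - i).+2 - a.+2 + (1 + a.+1))%N); last lia.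
rewrite vE -scalemxAr !mulmxXD Ed1 subnn expr1 -!scalemxAr (E_L0 l_lt) Ed2 !scalerA.
move=> /scale_bvec_eq0 cd0; apply: (mulIf d1_neq0); apply: (mulIf d2_neq0).
by rewrite !mul0r cd0 // /sI; lia.
Qed.

End HiRelationsInP.

Lemma tensC0 (R : realType) (r n : nat) (V : umod R n) : tensC R r 0 V = V.
Proof.
case: V => E F H K Ki; rewrite /tensC /= mul0r oppr0 /qpow expr0z !scale1r.
by rewrite mulr0z raddf0 add0r.
Qed.

Section DeterminedByTop.
Context {R : realType} {r i : nat}.
Hypothesis i_lt : (i + 2 <= r)%N.
Local Notation b := (bvec R r.*2).
Local Notation h0 := (b (hI i 0)).

(* [mor_det] only picks a morphism when one exists; a given morphism [f] with
   [f h_i = c w] provides one (namely [c^-1 f]) as soon as [c != 0]. *)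
Lemma mor_detE {W : umod R r.*2} {f : 'M[complex R]_(r.*2)} {w : 'cV_(r.*2)} {c} :
  is_mor R (Pmod R r i) W f -> f *m h0 = c *: w -> f = c *: mor_det R r i W w.
Proof.
move=> f_mor fh.
have [c0|c_neq0] := eqVneq c 0.
  by rewrite c0 scale0r (mor_eq0 i_lt f_mor) // fh c0 scale0r.
have [g_mor gh] : is_mor R (Pmod R r i) W (mor_det R r i W w) /\
                  mor_det R r i W w *m h0 = w.
  apply: (epsilon_spec (inhabits 0) (fun g => is_mor R _ W g /\ g *m h0 = w)).
  exists (c^-1 *: f); split; first exact: is_morZ _ f_mor.
  by rewrite -scalemxAl fh scalerA mulVf ?scale1r.
apply/eqP; rewrite -subr_eq0; apply/eqP.
apply: (mor_eq0 i_lt (is_morB f_mor (is_morZ c g_mor))).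
by rewrite mulmxBl -scalemxAl gh fh subrr.
Qed.

Lemma Imor_id : Imor R r i = 1%:M.
Proof.
have id_mor : is_mor R (Pmod R r i) (tensC R r 0 (Pmod R r i)) 1%:M.
  by rewrite tensC0; split; rewrite mul1mx mulmx1.
by rewrite [RHS](mor_detE id_mor (_ : _ = 1 *: h0)) ?scale1r ?mul1mx.
Qed.

Lemma mor_Ix (f : 'M[complex R]_(r.*2)) (x y : complex R) :
  is_mor R (Pmod R r i) (tensC R r 0 (Pmod R r i)) f ->
  f *m h0 = x *: h0 + y *: b (sI i 0) -> f = x *: Imor R r i + y *: xmor R r i.
Proof.
move=> f_mor fh; rewrite Imor_id -(mor_detE (f := f - x *: 1%:M)).
- by rewrite addrC subrK.
- apply: is_morB f_mor (is_morZ _ _).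
  by rewrite tensC0; split; rewrite mul1mx mulmx1.
- by rewrite mulmxBl -scalemxAl mul1mx fh addrAC subrr add0r.
Qed.

End DeterminedByTop.

Lemma mor_weight {R : realType} {r i l : nat} {k : int} {f : 'M[complex R]_(r.*2)} :
  (i + 2 <= r)%N -> is_mor R (Pmod R r i) (tensC R r k (Pmod R r l)) f ->
  actH R _ (Pmod R r l) *m (f *m bvec R r.*2 (hI i 0)) =
    (i%:Z - k * r%:Z)%:~R *: (f *m bvec R r.*2 (hI i 0)).
Proof.
move=> i_lt f_mor; set v := f *m _.
have h0_lt : (hI i 0 < r.*2)%N by rewrite /hI; lia.
have := mor_H_eigen f_mor (H_bvec (R := R) (l := i) h0_lt).
rewrite (wt_h i_lt) // mulr0 subr0 -/v /= mulmxDl mul_scalar_mx => Hv.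
by rewrite intrB scalerBl -Hv addrAC subrr add0r.
Qed.

Theorem proposition7p1 (R : realType) (r i l : nat) (k : int)
    (f : 'M[complex R]_(r.*2)) :
  (i + 2 <= r)%N -> (l + 2 <= r)%N ->
  is_mor R (Pmod R r i) (tensC R r k (Pmod R r l)) f -> f != 0 ->
  (exists lam mu : complex R,
      [/\ k = 0, l = i & f = lam *: Imor R r i + mu *: xmor R r i]) \/
  (exists lam : complex R,
      [/\ k = 1, l = (r - 2 - i)%N & f = lam *: alpha_plus R r i]) \/
  (exists lam : complex R,
      [/\ k = -1, l = (r - 2 - i)%N & f = lam *: alpha_minus R r i]).
Proof.
move=> i_lt l_lt f_mor f_neq0.
have v_wt := mor_weight i_lt f_mor; set v := f *m _ in v_wt.
have v_neq0 : v != 0 by apply: contra f_neq0 => /eqP/(mor_eq0 i_lt f_mor)->.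
have v_rels : hi_relations r i (actE R _ (Pmod R r l)) (actF R _ (Pmod R r l)) v.
  apply: (hi_relations_scaleF (qpow_neq0 r (- (k * r%:Z)) _)); first lia.
  exact: hi_relations_mor f_mor (Pmod_hi_relations i_lt).
case: (weight_vector_cases l_lt v_wt v_neq0) => [[a [x [y [a_le wt_a vE]]]]|
    [a [c [a_le wt_a vE]]]|[a [c [a_le wt_a vE]]]].
- have [|a0 k0 li] := hi_relations_hs k i_lt l_lt v_rels v_neq0 a_le vE; first lia.
  subst a k l; left; exists x, y; split => //.
  by apply: mor_Ix.
- have [|a_top k0 li] := hi_relations_R k i_lt l_lt v_rels v_neq0 a_le vE; first lia.
  subst k l; right; right.
  have qf_neq0 : (qfact R r i)^-2 != 0.
    by rewrite invr_eq0 expf_neq0 // qfact_neq0 //; lia.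
  exists (c / (qfact R r i)^-2); split => //; apply: (mor_detE i_lt f_mor).
  by rewrite -/v vE scalerA divfK // (_ : a = i) //; lia.
- have [|a0 k0 li] := hi_relations_L k i_lt l_lt v_rels v_neq0 a_le vE; first lia.
  subst a k l; right; left; exists c; split => //.
  exact: (mor_detE i_lt f_mor).
Qed.
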